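(* Assume $\mathbb E f(\boldsymbol X)=0$ and $p_{\min}>0$. Let $J_1,J_2,\dots\subset\{1,\dots,M\}$ be any sequence of sets with $\#J_l\le2$, and define $R_0^\star\equiv0$, $R_l^\star(\boldsymbol X)=R_{l-1}^\star(\boldsymbol X)+\mathbb E(f(\boldsymbol X)-R_{l-1}^\star(\boldsymbol X)\mid\boldsymbol X_{\mathcal X(J_l)})$. Then for each $l>0$ and every $J\subset\{1,\dots,M\}$ with $\#J\le2$, $$|\mathbb E(f(\boldsymbol X)-R_{l-1}^\star(\boldsymbol X)\mid\boldsymbol X_{\mathcal X(J)})|\le 3\sqrt{\mathbb E[f(\boldsymbol X)^2]}\,p_{\min}^{-1}\quad\text{almost surely},$$ and for each $s>0$, $\iota_s\le 3s\sqrt{\mathbb E[f(\boldsymbol X)^2]}\,p_{\min}^{-1}$, where $\iota_s=\sum_{l=1}^s\max_{\vec c\in\{0,1\}^{\#\mathcal X(J_l)}}|\mathbb E[f(\boldsymbol X)-R_{l-1}^\star(\boldsymbol X)\mid\boldsymbol X_{\mathcal X(J_l)}=\vec c]|$.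
   Context: Setup. $\boldsymbol X=(X_1,\dots,X_p)^\top$ is a random vector in $\{0,1\}^p$; $\{1,\dots,p\}$ is partitioned into disjoint nonempty feature groups $\mathcal X(1),\dots,\mathcal X(M)$, $M\ge 2$; a group is either a single feature or has $\#\mathcal X(m)>1$ and consists of one-hot indicators ($\sum_{j\in\mathcal X(m)}\mathbf 1\{X_j=1\}=1$ a.s.). $\mathcal X(J)=\bigcup_{m\in J}\mathcal X(m)$, $\boldsymbol X_H=(X_j)_{j\in H}$. Convention: $\mathbb E(h(\boldsymbol X)\mid\boldsymbol X_H=\vec c)=0$ when $\mathbb P(\boldsymbol X_H=\vec c)=0$. $p_{\min}=\min_{1\le l<k\le M,\,i\in\mathcal X(l),\,j\in\mathcal X(k),\,(a,b)\in\{0,1\}^2}\mathbb P(X_i=a,X_j=b)$. $f:\{0,1\}^p\to\mathbb R$. *)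

From HB Require Import structures.
From mathcomp Require Import all_boot all_order all_algebra.
From mathcomp Require Import reals.
Set Implicit Arguments. Unset Strict Implicit. Unset Printing Implicit Defensive.
Import Order.TTheory GRing.Theory Num.Theory.
Local Open Scope ring_scope.

Section Defs.
Variables (R : realType) (p M : nat).
Notation vec := {ffun 'I_p -> bool}.
Variable (P : vec -> R).

Definition is_pmf := (forall x, 0 <= P x) /\ \sum_x P x = 1.

(* g i = index m of the group X(m) containing feature i *)
Variable (g : 'I_p -> 'I_M).

Definition grp (m : 'I_M) : {set 'I_p} := [set i | g i == m].
Definition grpJ (J : {set 'I_M}) : {set 'I_p} := [set i | g i \in J].

(* well-formed feature groups: nonempty, and a group with more than one
   feature consists of one-hot indicators (almost surely) *)
Definition groups_ok :=
  (forall m : 'I_M, 0 < #|grp m|)%N /\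
  (forall m : 'I_M, (1 < #|grp m|)%N ->
     forall x, 0 < P x -> #|[set j in grp m | x j]| = 1%N).

Definition expect (h : vec -> R) : R := \sum_x P x * h x.

(* E(h(X) | X_H = x_H), with value 0 on null events *)
Definition condexp (h : vec -> R) (H : {set 'I_p}) (x : vec) : R :=
  let den := \sum_(y : vec | [forall i in H, y i == x i]) P y in
  if den == 0 then 0
  else (\sum_(y : vec | [forall i in H, y i == x i]) P y * h y) / den.

Definition prob2 (i j : 'I_p) (a b : bool) : R :=
  \sum_(x : vec | (x i == a) && (x j == b)) P x.

Definition pmin : R :=
  \big[Num.min/1]_(i : 'I_p) \big[Num.min/1]_(j : 'I_p | (g i < g j)%N)
    \big[Num.min/1]_(a : bool) \big[Num.min/1]_(b : bool) prob2 i j a b.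

(* R*_l, for the sequence J_1, J_2, ... given by J l (l >= 1; J 0 unused) *)
Fixpoint Rstar (f : vec -> R) (J : nat -> {set 'I_M}) (l : nat) : vec -> R :=
  match l with
  | 0%N => fun _ => 0
  | l'.+1 => fun x => Rstar f J l' x +
      condexp (fun y => f y - Rstar f J l' y) (grpJ (J l)) x
  end.

(* iota_s = sum_{l=1}^s max_c |E[f - R*_{l-1} | X_{X(J_l)} = c]|;
   c ranges over {0,1}^{X(J_l)}, realized as the restrictions of all x *)
Definition iota_sum (f : vec -> R) (J : nat -> {set 'I_M}) (s : nat) : R :=
  \sum_(1 <= l < s.+1)
    \big[Num.max/0]_(x : vec)
       `|condexp (fun y => f y - Rstar f J l.-1 y) (grpJ (J l)) x|.
End Defs.

(* Conditional expectation given [X_H] is the orthogonal projection onto the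
   functions of [X_H] in L^2(P), so every residual [f - R*_l] has second moment
   at most [E[f^2]].  On a cell [{X_H = c}] of mass [D > 0], Cauchy-Schwarz gives
   [E[h | X_H = c]^2 * D <= E[h^2]].  When [H] covers at most two groups, [D >= p_min]:
   on the support of [P] one coordinate of each group determines the whole group,
   so the cell contains, up to a null set, an event [{X_i = a, X_j = b}] with [i]
   and [j] in different groups.  Hence every such conditional expectation of a
   residual is bounded by [sqrt E[f^2] / sqrt p_min <= sqrt E[f^2] / p_min], and
   summing over [l] bounds [iota_s]. *)

From mathcomp Require Import all_boot all_order all_algebra.
From mathcomp Require Import reals ring lra.
Set Implicit Arguments. Unset Strict Implicit. Unset Printing Implicit Defensive.
Import Order.TTheory GRing.Theory Num.Theory.
Local Open Scope ring_scope.

Section NonnegSums.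
Variables (R : realFieldType) (T : finType) (w : T -> R).
Hypothesis w_ge0 : forall y, 0 <= w y.

Lemma ler_sum_supp (A B : pred T) : (forall y, 0 < w y -> B y -> A y) ->
  \sum_(y | B y) w y <= \sum_(y | A y) w y.
Proof.
move=> BA; rewrite [leLHS]big_mkcond [leRHS]big_mkcond /=.
apply: ler_sum => y _; case: ifP => By; case: ifP => Ay //.
by rewrite leNgt; apply/negP => /BA/(_ By); rewrite Ay.
Qed.

Lemma weighted_cauchy_schwarz (A : pred T) (h : T -> R) : 0 < \sum_(y | A y) w y ->
  (\sum_(y | A y) w y * h y) ^+ 2 <= (\sum_(y | A y) w y) * \sum_(y | A y) w y * h y ^+ 2.
Proof.
set S := \sum_(y | A y) w y; set U := \sum_(y | A y) w y * h y ^+ 2.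
set V := \sum_(y | A y) w y * h y => S_gt0.
have : 0 <= \sum_(y | A y) w y * (S * h y - V) ^+ 2.
  by apply: sumr_ge0 => y _; rewrite mulr_ge0 ?sqr_ge0.
rewrite (eq_bigr (fun y => S ^+ 2 * (w y * h y ^+ 2) - 2 * S * V * (w y * h y) + V ^+ 2 * w y)); last first.
  by move=> y _; ring.
rewrite big_split sumrB /= -!mulr_sumr -/S -/U -/V.
have -> : S ^+ 2 * U - 2 * S * V * V + V ^+ 2 * S = S * (S * U - V ^+ 2) by ring.
by rewrite pmulr_rge0 // subr_ge0.
Qed.

End NonnegSums.

Lemma subset_pair (T : finType) (A : {set T}) : (1 < #|T|)%N -> (#|A| <= 2)%N ->
  exists m k, m != k /\ A \subset [set m; k].
Proof.
move=> /card_gt1P [a [b [_ _ ab]]].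
rewrite leq_eqVlt ltnS leq_eqVlt ltnS leqn0.
case/or3P => [/cards2P [m [k [mk ->]]]|/cards1P [m ->]|/eqP/cards0_eq ->].
- by exists m, k.
- have [<-|am] := eqVneq a m; first by exists a, b; rewrite sub1set !inE eqxx.
  by exists m, a; rewrite eq_sym am sub1set !inE eqxx.
- by exists a, b; rewrite sub0set.
Qed.

Lemma one_hot_agree (T : finType) (S : {set T}) (x y : T -> bool) (i : T) :
  #|[set j in S | x j]| = 1%N -> #|[set j in S | y j]| = 1%N ->
  i \in S -> x i -> y i -> {in S, x =1 y}.
Proof.
move=> /eqP/cards1P [a Ea] /eqP/cards1P [b Eb] iS xi yi j jS.
have hot (z : T -> bool) c : [set j in S | z j] = [set c] -> z i -> z j = (j == i).
  move=> Ez zi; have : i \in [set j in S | z j] by rewrite inE iS zi.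
  by rewrite Ez inE => /eqP ->; rewrite -in_set1 -Ez inE jS.
by rewrite (hot _ _ Ea xi) (hot _ _ Eb yi).
Qed.

Section ConditionalExpectation.
Variables (R : realType) (p : nat).
Notation vec := {ffun 'I_p -> bool}.
Variable P : vec -> R.
Hypothesis P_ge0 : forall x, 0 <= P x.

Definition agree (H : {set 'I_p}) (x y : vec) : bool := [forall i in H, y i == x i].
Definition cell_mass H x := \sum_(y | agree H x y) P y.
Definition cell_sum (h : vec -> R) H x := \sum_(y | agree H x y) P y * h y.

Lemma condexpE h H x :
  condexp P h H x = if cell_mass H x == 0 then 0 else cell_sum h H x / cell_mass H x.
Proof. by []. Qed.

Lemma agree_refl H x : agree H x x.
Proof. exact/forall_inP. Qed.

Lemma agree_sym H x y : agree H x y = agree H y x.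
Proof. by apply/forall_inP/forall_inP => E i iH; rewrite eq_sym E. Qed.

Lemma agree_cell H x y : agree H x y -> agree H x =1 agree H y.
Proof.
move=> /forall_inP Exy z.
by apply/forall_inP/forall_inP => E i iH; rewrite (eqP (E i iH)) (eqP (Exy i iH)).
Qed.

Lemma cell_mass_agree H x y : agree H x y -> cell_mass H x = cell_mass H y.
Proof. by move=> /agree_cell E; apply: eq_bigl. Qed.

Lemma condexp_agree h H x y : agree H x y -> condexp P h H x = condexp P h H y.
Proof.
move=> xy; rewrite !condexpE (cell_mass_agree xy).
by rewrite /cell_sum (eq_bigl _ _ (agree_cell xy)).
Qed.

Lemma cell_mass_ge0 H x : 0 <= cell_mass H x.
Proof. exact: sumr_ge0. Qed.

Lemma cell_mass_eq0 H x : cell_mass H x = 0 -> P x = 0.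
Proof.
move=> /psumr_eq0P E; exact: E (fun y _ => P_ge0 y) _ (agree_refl H x).
Qed.

Lemma mass_over_cell H (F : vec -> R) x :
  P x * F x = \sum_(y | agree H x y) P y * P x * F x / cell_mass H x.
Proof.
have [/cell_mass_eq0 ->|D0] := eqVneq (cell_mass H x) 0.
  by rewrite mul0r big1 // => y _; rewrite mulr0 !mul0r.
rewrite -!big_distrl /= -/(cell_mass H x).
set c := cell_mass H x; rewrite -(mulrA c) (mulrC c) mulfK //.
Qed.

Lemma expect_mul_condexp (u h : vec -> R) H :
  (forall x y, agree H x y -> u x = u y) ->
  expect P (fun x => u x * h x) = expect P (fun x => u x * condexp P h H x).
Proof.
move=> u_cell; rewrite /expect.
under eq_bigr => y _ do rewrite (mass_over_cell H (fun y => u y * h y)).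
under eq_bigr => y _ do rewrite big_mkcond.
rewrite exchange_big /=; apply: eq_bigr => x _.
have [/cell_mass_eq0 ->|D0] := eqVneq (cell_mass H x) 0.
  by rewrite mul0r big1 // => y _; case: ifP => // _; rewrite !mul0r.
rewrite condexpE (negPf D0) /cell_sum mulr_suml !mulr_sumr [RHS]big_mkcond /=.
apply: eq_bigr => y _; rewrite agree_sym; case: ifP => // xy.
by rewrite (cell_mass_agree xy) (u_cell _ _ xy); ring.
Qed.

Lemma expect_ge0 h : (forall x, 0 <= h x) -> 0 <= expect P h.
Proof. by move=> h_ge0; apply: sumr_ge0 => x _; rewrite mulr_ge0. Qed.

Lemma expect_sq_ge0 h : 0 <= expect P (fun x => h x ^+ 2).
Proof. by apply: expect_ge0 => x; rewrite sqr_ge0. Qed.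

(* Pythagoras: [E[(h - E[h|H])^2] = E[h^2] - E[E[h|H]^2]]. *)
Lemma expect_sq_sub_condexp_le h H :
  expect P (fun x => (h x - condexp P h H x) ^+ 2) <= expect P (fun x => h x ^+ 2).
Proof.
set c := condexp P h H.
have tower := expect_mul_condexp h (@condexp_agree h H).
have cc_ge0 : 0 <= expect P (fun x => c x * c x).
  by apply: expect_ge0 => x; rewrite -expr2 sqr_ge0.
move: tower cc_ge0; rewrite /expect -/c => tower cc_ge0.
rewrite (eq_bigr (fun x => P x * h x ^+ 2 - 2 * (P x * (c x * h x)) + P x * (c x * c x))); last first.
  by move=> x _; ring.
rewrite big_split sumrB /= -mulr_sumr tower; lra.
Qed.

Lemma condexp_sq_mul_cell_mass_le h H x :
  condexp P h H x ^+ 2 * cell_mass H x <= expect P (fun y => h y ^+ 2).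
Proof.
rewrite condexpE; case: ifPn => [_|D_neq0]; first by rewrite expr0n mul0r expect_sq_ge0.
have D_gt0 : 0 < cell_mass H x by rewrite lt_def D_neq0 cell_mass_ge0.
have cell_le : cell_sum (fun y => h y ^+ 2) H x <= expect P (fun y => h y ^+ 2).
  by apply: ler_sum_supp => // y; rewrite mulr_ge0 ?sqr_ge0.
apply: le_trans cell_le; set N := cell_sum h H x; set D := cell_mass H x.
have -> : (N / D) ^+ 2 * D = N ^+ 2 / D by field.
by rewrite ler_pdivrMr // mulrC; apply: weighted_cauchy_schwarz.
Qed.

End ConditionalExpectation.

Section FeatureGroups.
Variables (R : realType) (p M : nat).
Notation vec := {ffun 'I_p -> bool}.
Variables (P : vec -> R) (g : 'I_p -> 'I_M).
Hypothesis P_ge0 : forall x, 0 <= P x.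
Hypothesis groups_wf : groups_ok P g.

Lemma prob2C i j a b : prob2 P i j a b = prob2 P j i b a.
Proof. by apply: eq_bigl => x; rewrite andbC. Qed.

Lemma pmin_le_prob2 i j a b : g i != g j -> pmin P g <= prob2 P i j a b.
Proof.
have ordered i' j' a' b' : (g i' < g j')%N -> pmin P g <= prob2 P i' j' a' b'.
  move=> lt_ij; rewrite /pmin.
  apply: le_trans (bigmin_le _ i' _) _; apply: le_trans (bigmin_le_cond _ _ lt_ij) _.
  by apply: le_trans (bigmin_le _ a' _) _; apply: bigmin_le.
by case: (ltngtP (g i) (g j)) => [/ordered //|/ordered|/val_inj ->]; rewrite ?eqxx // prob2C.
Qed.

Lemma pmin_le1 : pmin P g <= 1.
Proof. exact: bigmin_le_id. Qed.

(* On the support of [P], each group has a feature whose value fixes the whole group: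
   the feature itself for a singleton group, the hot indicator of [x] for a one-hot group. *)
Lemma group_feature_determines x m : 0 < P x ->
  exists2 i, g i = m & forall y, 0 < P y -> y i = x i -> {in grp g m, y =1 x}.
Proof.
move=> Px; case: groups_wf => ne one_hot.
have [big|] := ltnP 1 #|grp g m|.
  have /eqP/cards1P [i Ei] := one_hot m big x Px.
  have : i \in [set j in grp g m | x j] by rewrite Ei set11.
  rewrite !inE => /andP [/eqP gi xi]; exists i => // y Py yi.
  have iS : i \in grp g m by rewrite inE gi.
  by apply: (one_hot_agree (one_hot m big y Py) (one_hot m big x Px) iS); rewrite ?yi.
rewrite leq_eqVlt ltnS leqn0 => /orP [/cards1P [i Ei]|/eqP E]; last first.
  by move: (ne m); rewrite E.
have : i \in grp g m by rewrite Ei set11.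
by rewrite inE => /eqP gi; exists i => // y _ yi j; rewrite Ei inE => /eqP ->.
Qed.

Lemma cell_mass_pair x m k : 0 < P x -> m != k ->
  pmin P g <= cell_mass P (grpJ g [set m; k]) x.
Proof.
move=> Px mk.
have [i gi fix_m] := group_feature_determines m Px.
have [j gj fix_k] := group_feature_determines k Px.
apply: le_trans (pmin_le_prob2 (x i) (x j) (_ : g i != g j)) _; first by rewrite gi gj.
apply: ler_sum_supp => // y Py /andP [/eqP yi /eqP yj].
apply/forall_inP => t; rewrite !inE => /orP [] gt; apply/eqP.
  by apply: fix_m; rewrite ?inE.
by apply: fix_k; rewrite ?inE.
Qed.

Lemma cell_mass_subset (J1 J2 : {set 'I_M}) x : J1 \subset J2 ->
  cell_mass P (grpJ g J2) x <= cell_mass P (grpJ g J1) x.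
Proof.
move=> sJ; apply: ler_sum_supp => // y _ /forall_inP E; apply/forall_inP => t.
by rewrite inE => tJ; apply: E; rewrite inE (subsetP sJ).
Qed.

Hypothesis M_gt1 : (1 < M)%N.

(* A nonnull cell of at most two groups contains, up to a null set, an event
   [X_i = a, X_j = b] with [i], [j] in different groups. *)
Lemma cell_mass_ge_pmin (J' : {set 'I_M}) x : (#|J'| <= 2)%N ->
  0 < cell_mass P (grpJ g J') x -> pmin P g <= cell_mass P (grpJ g J') x.
Proof.
move=> cJ D_gt0.
have [y /andP [xy Py]] := psumr_neq0P (fun y _ => P_ge0 y) (elimN eqP (lt0r_neq0 D_gt0)).
rewrite (cell_mass_agree P xy).
have card_gt1 : (1 < #|'I_M|)%N by rewrite card_ord.
have [m [k [mk sJ]]] := subset_pair card_gt1 cJ.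
exact: le_trans (cell_mass_pair Py mk) (cell_mass_subset y sJ).
Qed.

Hypothesis pmin_gt0 : 0 < pmin P g.

Lemma condexp_norm_le h (J' : {set 'I_M}) x : (#|J'| <= 2)%N ->
  `|condexp P h (grpJ g J') x| <= Num.sqrt (expect P (fun y => h y ^+ 2)) / pmin P g.
Proof.
move=> cJ; set c := condexp P h (grpJ g J') x; set E := expect P _.
set D := cell_mass P (grpJ g J') x.
have E_ge0 : 0 <= E by apply: expect_sq_ge0.
have pmin_ge0 : 0 <= pmin P g := ltW pmin_gt0.
rewrite ler_pdivlMr // -ler_sqr ?nnegrE ?mulr_ge0 ?sqrtr_ge0 //.
rewrite sqr_sqrtr // exprMn real_normK ?num_real //.
have [D0|D_neq0] := eqVneq D 0.
  by rewrite /c condexpE -/D D0 eqxx expr0n mul0r.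
have D_gt0 : 0 < D by rewrite lt_def D_neq0 cell_mass_ge0.
have pmin2_le : pmin P g ^+ 2 <= D.
  apply: le_trans (cell_mass_ge_pmin cJ D_gt0); rewrite expr2 ler_piMr //.
  exact: pmin_le1.
apply: le_trans (condexp_sq_mul_cell_mass_le P_ge0 h (grpJ g J') x).
by rewrite ler_wpM2l ?sqr_ge0.
Qed.

Lemma expect_sq_residual_le f (J : nat -> {set 'I_M}) l :
  expect P (fun y => (f y - Rstar P g f J l y) ^+ 2) <= expect P (fun y => f y ^+ 2).
Proof.
elim: l => [|l IH]; first by apply: ler_sum => y _; rewrite /= subr0.
apply: le_trans IH; rewrite /expect /=.
under eq_bigr => y _ do rewrite opprD addrA.
exact: (expect_sq_sub_condexp_le P_ge0 (fun y => f y - Rstar P g f J l y)).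
Qed.

End FeatureGroups.

Theorem lemma2 (R : realType) (p M : nat) (P : {ffun 'I_p -> bool} -> R)
  (g : 'I_p -> 'I_M) (f : {ffun 'I_p -> bool} -> R) (J : nat -> {set 'I_M}) :
  (2 <= M)%N ->
  is_pmf P ->
  groups_ok P g ->
  expect P f = 0 ->
  0 < pmin P g ->
  (forall l, (0 < l)%N -> (#|J l| <= 2)%N) ->
  (forall l, (0 < l)%N -> forall J' : {set 'I_M}, (#|J'| <= 2)%N ->
     forall x, 0 < P x ->
       `|condexp P (fun y => f y - Rstar P g f J l.-1 y) (grpJ g J') x|
         <= 3 * Num.sqrt (expect P (fun y => f y ^+ 2)) / pmin P g)
  /\
  (forall s, (0 < s)%N ->
     iota_sum P g f J s <= 3 * s%:R * Num.sqrt (expect P (fun y => f y ^+ 2)) / pmin P g).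
Proof.
move=> M_gt1 [P_ge0 _] groups_wf _ pmin_gt0 J_card.
set E := expect P (fun y => f y ^+ 2); set B := Num.sqrt E / pmin P g.
have B_ge0 : 0 <= B by rewrite divr_ge0 ?sqrtr_ge0 ?ltW.
have bound l (J' : {set 'I_M}) x : (#|J'| <= 2)%N ->
    `|condexp P (fun y => f y - Rstar P g f J l y) (grpJ g J') x| <= B.
  move=> cJ; apply: le_trans (condexp_norm_le P_ge0 groups_wf M_gt1 pmin_gt0 _ x cJ) _.
  rewrite ler_pM2r ?invr_gt0 // ler_sqrt ?expect_sq_ge0 //.
  exact: expect_sq_residual_le.
split=> [l _ J' cJ x _ | s _].
  by apply: le_trans (bound _ _ x cJ) _; rewrite -mulrA; apply: ler_peMl; rewrite ?ler1n.
apply: le_trans (_ : \sum_(1 <= l < s.+1) B <= _).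
  apply: ler_sum_nat => l /andP [l_gt0 _]; apply: bigmax_le => // x _.
  exact: bound (J_card l l_gt0).
have -> : 3 * s%:R * Num.sqrt E / pmin P g = 3 * (s%:R * B) by rewrite /B; ring.
rewrite sumr_const_nat subn1 -[B *+ _]mulr_natl /=.
by apply: ler_peMl; rewrite ?ler1n // mulr_ge0.
Qed.
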